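(* For every $n\geq 4$ there exist a convex $n$-gon $Q$ (with vertices $p_1,\dots,p_n$ in cyclic order, $p_i$ labeled $i$) and vectors $x_d\in X_Q$ for every $d\in\mathrm{Diag}_n$ such that $\langle f_d^\perp, x_{d'}\rangle>0$ whenever $d\rhd d'$.
   Context: Let $Q$ be a convex $n$-gon in $\mathbb{R}^2$ with vertices $p_1,\dots,p_n$ in cyclic order; identify $p_i$ with label $i$, so triangulations of $Q$ (using only vertices of $Q$) are identified with elements of $\mathcal{T}_n$ (each triangulation identified with its set of diagonals) and diagonals with elements of $\mathrm{Diag}_n=\{\{i,j\}\subseteq[n]: i-j\not\equiv\pm1 \pmod n\}$. Two diagonals cross if they meet in the interior of $Q$. Let $X_Q$ be the space of formal combinations $\sum_{p\in V(Q)} c_p\cdot p$ with $\sum_p c_p=0$ and $\sum_p c_p p=0$ in $\mathbb{R}^2$; let $X_Q^*$ be the space of functions $V(Q)\to\mathbb{R}$ modulo restrictions of affine functions $\mathbb{R}^2\to\mathbb{R}$, with pairing $\langle[\psi],\sum_p c_p\cdot p\rangle=\sum_p c_p\psi(p)$. For a triangulation $T$ let $v_T=(\operatorname{area}(Q_{T,p}))_{p\in V(Q)}$ where $Q_{T,p}$ is the union of the triangles of $T$ having $p$ as a vertex. The secondary polytope $\Sigma_Q$ is the convex hull of the $v_T$, translated to lie in $X_Q$. It is known (Gelfand–Kapranov–Zelevinsky) that $\Sigma_Q$ is a full-dimensional polytope in the $(n-3)$-dimensional space $X_Q$ realizing the associahedron: its vertices are exactly the points $v_T$, $T\in\mathcal{T}_n$;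 its facets are $f_d$, $d\in\mathrm{Diag}_n$, where $f_d$ contains $v_T$ iff $d\in T$; and an outward normal of $f_d$ is $f_d^\perp=[\psi_d]$, where $\psi_d=\min(\ell_d,0)$ restricted to $V(Q)$ and $\ell_d$ is any nonzero affine function vanishing at both endpoints of $d$. Two facets $f_d,f_{d'}$ share a vertex iff $d,d'$ do not cross. Swapping relation: for $\{i,j\},\{i',j'\}\in\mathrm{Diag}_n$ written with $i<j$ and $i'<j'$, write $\{i,j\}\rhd\{i',j'\}$ if either $\{i,j\}$ and $\{i',j'\}$ do not cross (in particular $d\rhd d$ for every $d$), or $i'<i<j'<j<n$ and $j'-i>1$. *)

From Stdlib Require Import Reals Lra Lia Arith.
Open Scope R_scope.

Definition pt : Type := (R * R)%type.

Definition orient (a b c : pt) : R :=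
  (fst b - fst a) * (snd c - snd a) - (snd b - snd a) * (fst c - fst a).

Fixpoint sum_lab (n : nat) (f : nat -> R) : R :=
  match n with
  | O => 0
  | S m => sum_lab m f + f (S m)
  end.

(* p 1, ..., p n are the vertices of a convex n-gon, in cyclic order:
   all triples of labels i<j<k are strictly oriented the same way
   (counterclockwise, or clockwise). *)
Definition convex_ngon (n : nat) (p : nat -> pt) : Prop :=
  (forall i j k : nat, (1 <= i)%nat -> (i < j)%nat -> (j < k)%nat -> (k <= n)%nat ->
     orient (p i) (p j) (p k) > 0)
  \/
  (forall i j k : nat, (1 <= i)%nat -> (i < j)%nat -> (j < k)%nat -> (k <= n)%nat ->
     orient (p i) (p j) (p k) < 0).

(* {i,j} in Diag_n, written with i < j : labels in 1..n, not cyclically adjacent. *)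
Definition is_diag (n i j : nat) : Prop :=
  (1 <= i)%nat /\ (i < j)%nat /\ (j <= n)%nat /\ (j <> S i) /\ ~ (i = 1%nat /\ j = n).

(* Diagonals {i,j}, {i',j'} (i<j, i'<j') of a convex polygon cross (meet in
   the interior) iff their endpoints strictly interleave. *)
Definition crossing (i j i' j' : nat) : Prop :=
  ((i < i')%nat /\ (i' < j)%nat /\ (j < j')%nat) \/
  ((i' < i)%nat /\ (i < j')%nat /\ (j' < j)%nat).

Definition swap_rel (n i j i' j' : nat) : Prop :=
  ~ crossing i j i' j' \/
  ((i' < i)%nat /\ (i < j')%nat /\ (j' < j)%nat /\ (j < n)%nat /\ (j' - i > 1)%nat).

(* c : labels -> R is a formal combination sum_k c k * p_k lying in X_Q. *)
Definition in_XQ (n : nat) (p : nat -> pt) (c : nat -> R) : Prop :=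
  sum_lab n c = 0 /\
  sum_lab n (fun k => c k * fst (p k)) = 0 /\
  sum_lab n (fun k => c k * snd (p k)) = 0.

(* psi_d = min(l_d, 0) on the vertices, with l_d the nonzero affine function
   x |-> det(p_j - p_i, x - p_i) vanishing at p_i and p_j. *)
Definition psi (p : nat -> pt) (i j : nat) (k : nat) : R :=
  Rmin (orient (p i) (p j) (p k)) 0.

Definition pairing (n : nat) (p : nat -> pt) (i j : nat) (c : nat -> R) : R :=
  sum_lab n (fun k => c k * psi p i j k).

From Stdlib Require Import Reals Lra Lia Arith.
Open Scope R_scope.

(* Put the vertices on the parabola y = x^2 at parameters t_k = -2^-k (k < n)
   and t_n = 1.  Then l_d(p_k) is a quadratic polynomial in t_k, so X_Q kills
   it, and <f_d^perp, x> can be read off either from the vertices strictly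
   inside d or, with the opposite sign, from those strictly outside d.  For the
   diagonal {a, b} take x_ab positive at a and b and negative elsewhere: any
   nonnegative weight w on the other vertices with
   sum_k w_k (t_k - t_a) (t_k - t_b) = 0 is completed to such an element of X_Q
   by masses at a and b matching its moments of order 0 and 1.  This handles
   all non-crossing pairs.  In the swapped configuration a < i < b < j < n the
   only positive contribution outside {i, j} comes from a; putting enough
   weight on n and capping the mass at a makes n outweigh it, and the
   geometric spacing of the t_k leaves room for the cap. *)

Lemma sum_lab_ext n f g :
  (forall k, (1 <= k <= n)%nat -> f k = g k) -> sum_lab n f = sum_lab n g.
Proof.
  induction n; intros H; simpl; [reflexivity|].
  rewrite IHn, H by (lia || (intros; apply H; lia)). reflexivity.
Qed.

Lemma sum_lab_add n f g :
  sum_lab n (fun k => f k + g k) = sum_lab n f + sum_lab n g.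
Proof. induction n; simpl; [ring|]. rewrite IHn; ring. Qed.

Lemma sum_lab_scal n r f : sum_lab n (fun k => r * f k) = r * sum_lab n f.
Proof. induction n; simpl; [ring|]. rewrite IHn; ring. Qed.

Lemma sum_lab_zero n f : (forall k, (1 <= k <= n)%nat -> f k = 0) -> sum_lab n f = 0.
Proof.
  induction n; intros H; simpl; [reflexivity|].
  rewrite IHn, H by (lia || (intros; apply H; lia)). ring.
Qed.

Lemma sum_lab_le n f g :
  (forall k, (1 <= k <= n)%nat -> f k <= g k) -> sum_lab n f <= sum_lab n g.
Proof.
  induction n; intros H; simpl; [lra|].
  pose proof (H (S n) ltac:(lia)). pose proof (IHn (fun k Hk => H k ltac:(lia))). lra.
Qed.

Definition unit_vec (a k : nat) : R := if Nat.eqb k a then 1 else 0.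

Lemma unit_vec_same a : unit_vec a a = 1.
Proof. unfold unit_vec. now rewrite Nat.eqb_refl. Qed.

Lemma unit_vec_other a k : k <> a -> unit_vec a k = 0.
Proof. intros H. unfold unit_vec. now destruct (Nat.eqb_spec k a). Qed.

Lemma unit_vec_nonneg a k : 0 <= unit_vec a k.
Proof. unfold unit_vec. destruct (Nat.eqb k a); lra. Qed.

Lemma sum_lab_unit_vec n a f :
  (1 <= a <= n)%nat -> sum_lab n (fun k => unit_vec a k * f k) = f a.
Proof.
  induction n; intros Ha; [lia|]. simpl.
  destruct (Nat.eq_dec (S n) a) as [<- | Hna].
  - rewrite sum_lab_zero, unit_vec_same; [ring|].
    intros k Hk. rewrite unit_vec_other by lia. ring.
  - rewrite IHn, unit_vec_other by lia. ring.
Qed.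

Lemma sum_lab_two_points n p q u v g :
  (1 <= p <= n)%nat -> (1 <= q <= n)%nat ->
  sum_lab n (fun k => (unit_vec p k * u + unit_vec q k * v) * g k) = u * g p + v * g q.
Proof.
  intros Hp Hq.
  rewrite (sum_lab_ext n _ (fun k => u * (unit_vec p k * g k) + v * (unit_vec q k * g k)))
    by (intros; ring).
  now rewrite sum_lab_add, !sum_lab_scal, !sum_lab_unit_vec.
Qed.

Lemma sum_lab_ge_two_terms n f a c :
  (1 <= a <= n)%nat -> (1 <= c <= n)%nat -> a <> c ->
  (forall k, (1 <= k <= n)%nat -> k <> a -> k <> c -> 0 <= f k) ->
  f a + f c <= sum_lab n f.
Proof.
  intros Ha Hc Hac Hf.
  rewrite <- (Rmult_1_l (f a)), <- (Rmult_1_l (f c)), <- (sum_lab_two_points n a c 1 1 f) by assumption.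
  apply sum_lab_le. intros k Hk.
  destruct (Nat.eq_dec k a) as [-> | Hka]; [rewrite unit_vec_same, unit_vec_other by auto; lra|].
  destruct (Nat.eq_dec k c) as [-> | Hkc]; [rewrite unit_vec_same, unit_vec_other by auto; lra|].
  rewrite !unit_vec_other by auto. pose proof (Hf k Hk Hka Hkc). lra.
Qed.

Lemma sum_lab_pos n f k0 :
  (forall k, (1 <= k <= n)%nat -> 0 <= f k) -> (1 <= k0 <= n)%nat -> 0 < f k0 ->
  0 < sum_lab n f.
Proof.
  intros Hf Hk0 Hpos. apply Rlt_le_trans with (f k0); [exact Hpos|].
  rewrite <- (sum_lab_unit_vec n k0 f Hk0). apply sum_lab_le. intros k Hk.
  destruct (Nat.eq_dec k k0) as [-> | Hne]; [rewrite unit_vec_same; lra|].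
  rewrite unit_vec_other by exact Hne. pose proof (Hf k Hk). lra.
Qed.

Definition sign_pattern (n a b : nat) (c : nat -> R) : Prop :=
  0 < c a /\ 0 < c b /\ forall k, (1 <= k <= n)%nat -> k <> a -> k <> b -> c k < 0.

Section Parabola.

Variable t : nat -> R.

Definition parabola (k : nat) : pt := (t k, t k * t k).

Local Notation ell i j k := (orient (parabola i) (parabola j) (parabola k)).

Lemma orient_parabola i j k : ell i j k = (t j - t i) * ((t k - t i) * (t k - t j)).
Proof. unfold orient, parabola; simpl; ring. Qed.

Lemma orient_parabola_endpoint i j k : (k = i \/ k = j)%nat -> ell i j k = 0.
Proof. intros [-> | ->]; rewrite orient_parabola; ring. Qed.

Variable n : nat.
Hypothesis t_lt : forall i j, (i < j)%nat -> (j <= n)%nat -> t i < t j.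

Lemma parabola_convex : convex_ngon n parabola.
Proof.
  left. intros i j k _ Hij Hjk Hk. rewrite orient_parabola.
  pose proof (t_lt i j Hij ltac:(lia)). pose proof (t_lt i k ltac:(lia) Hk).
  pose proof (t_lt j k Hjk Hk).
  apply Rlt_gt, Rmult_lt_0_compat; [lra|]. apply Rmult_lt_0_compat; lra.
Qed.

Lemma orient_parabola_inside i j k :
  (i < k)%nat -> (k < j)%nat -> (j <= n)%nat -> ell i j k < 0.
Proof.
  intros Hik Hkj Hj. rewrite orient_parabola.
  pose proof (t_lt i k Hik ltac:(lia)). pose proof (t_lt k j Hkj Hj).
  assert (0 < (t k - t i) * (t j - t k)) by (apply Rmult_lt_0_compat; lra). nra.
Qed.

Lemma orient_parabola_outside i j k :
  (i < j)%nat -> (j <= n)%nat -> (k <= n)%nat -> (k < i \/ j < k)%nat -> 0 < ell i j k.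
Proof.
  intros Hij Hj Hk Hout. rewrite orient_parabola. pose proof (t_lt i j Hij Hj).
  apply Rmult_lt_0_compat; [lra|]. destruct Hout.
  - pose proof (t_lt k i ltac:(lia) ltac:(lia)). nra.
  - pose proof (t_lt j k ltac:(lia) Hk). nra.
Qed.

Lemma Rmin_orient_parabola_outside i j k :
  (i < j)%nat -> (j <= n)%nat -> (k <= n)%nat -> (k <= i \/ j <= k)%nat ->
  Rmin (ell i j k) 0 = 0.
Proof.
  intros Hij Hj Hk Hout. apply Rmin_right.
  assert (H : (k = i \/ k = j)%nat \/ (k < i \/ j < k)%nat) by lia. destruct H.
  - rewrite orient_parabola_endpoint by assumption. lra.
  - pose proof (orient_parabola_outside i j k Hij Hj Hk H). lra.
Qed.

Lemma Rmax_orient_parabola_inside i j k :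
  (i <= k <= j)%nat -> (j <= n)%nat -> Rmax (ell i j k) 0 = 0.
Proof.
  intros Hin Hj. apply Rmax_right.
  assert (H : (k = i \/ k = j)%nat \/ (i < k < j)%nat) by lia. destruct H.
  - rewrite orient_parabola_endpoint by assumption. lra.
  - pose proof (orient_parabola_inside i j k ltac:(lia) ltac:(lia) Hj). lra.
Qed.

(* The affine function behind psi_{ij} is a quadratic polynomial in t, hence
   annihilated by X_Q. *)
Lemma sum_orient_parabola_XQ i j c :
  in_XQ n parabola c -> sum_lab n (fun k => c k * ell i j k) = 0.
Proof.
  intros [H0 [H1 H2]].
  rewrite (sum_lab_ext n _ (fun k => (t j - t i) * (t i * t j * c k
            + (- (t i + t j) * (c k * fst (parabola k)) + c k * snd (parabola k))))).
  - rewrite sum_lab_scal, !sum_lab_add, !sum_lab_scal, H0, H1, H2. ring.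
  - intros k _. rewrite orient_parabola. unfold parabola; simpl. ring.
Qed.

Lemma pairing_parabola_outside i j c :
  in_XQ n parabola c ->
  pairing n parabola i j c = sum_lab n (fun k => - c k * Rmax (ell i j k) 0).
Proof.
  intros Hc. unfold pairing, psi.
  transitivity (sum_lab n (fun k => c k * ell i j k)
                + sum_lab n (fun k => - c k * Rmax (ell i j k) 0)).
  - rewrite <- sum_lab_add. apply sum_lab_ext. intros k _.
    unfold Rmin, Rmax. destruct (Rle_dec (ell i j k) 0); ring.
  - rewrite sum_orient_parabola_XQ by exact Hc. ring.
Qed.

Lemma pairing_parabola_pos_inside i j c :
  (1 <= i)%nat -> (i + 2 <= j)%nat -> (j <= n)%nat ->
  (forall k, (i < k < j)%nat -> c k < 0) -> pairing n parabola i j c > 0.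
Proof.
  intros Hi Hij Hj Hc. unfold pairing, psi.
  apply Rlt_gt, (sum_lab_pos _ _ (S i)); [intros k Hk | lia |].
  - assert (H : (i < k < j)%nat \/ (k <= i \/ j <= k)%nat) by lia. destruct H as [Hin | Hout].
    + pose proof (orient_parabola_inside i j k ltac:(lia) ltac:(lia) Hj).
      pose proof (Hc k Hin). rewrite Rmin_left by lra. nra.
    + rewrite Rmin_orient_parabola_outside by lia. lra.
  - pose proof (orient_parabola_inside i j (S i) ltac:(lia) ltac:(lia) Hj).
    pose proof (Hc (S i) ltac:(lia)). rewrite Rmin_left by lra. nra.
Qed.

Lemma outside_term_nonneg i j c k :
  (i < j)%nat -> (j <= n)%nat -> (1 <= k <= n)%nat ->
  ((k < i \/ j < k)%nat -> c k < 0) -> 0 <= - c k * Rmax (ell i j k) 0.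
Proof.
  intros Hij Hj Hk Hc.
  assert (H : (k < i \/ j < k)%nat \/ (i <= k <= j)%nat) by lia. destruct H as [Hout | Hin].
  - pose proof (orient_parabola_outside i j k Hij Hj ltac:(lia) Hout).
    pose proof (Hc Hout). rewrite Rmax_left by lra. nra.
  - rewrite Rmax_orient_parabola_inside by lia. lra.
Qed.

Lemma pairing_parabola_pos_outside i j c k0 :
  in_XQ n parabola c -> (i < j)%nat -> (j <= n)%nat ->
  (forall k, (1 <= k <= n)%nat -> (k < i \/ j < k)%nat -> c k < 0) ->
  (1 <= k0 <= n)%nat -> (k0 < i \/ j < k0)%nat -> pairing n parabola i j c > 0.
Proof.
  intros HX Hij Hj Hc Hk0 Hout. rewrite pairing_parabola_outside by exact HX.
  apply Rlt_gt, (sum_lab_pos _ _ k0); [intros k Hk | exact Hk0 |].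
  - apply outside_term_nonneg; auto.
  - pose proof (orient_parabola_outside i j k0 Hij Hj ltac:(lia) Hout).
    pose proof (Hc k0 Hk0 Hout). rewrite Rmax_left by lra. nra.
Qed.

Lemma pairing_parabola_pos_swap i j c a :
  in_XQ n parabola c -> (1 <= a)%nat -> (a < i)%nat -> (i < j)%nat -> (j < n)%nat ->
  (forall k, (1 <= k <= n)%nat -> k <> a -> (k < i \/ j < k)%nat -> c k < 0) ->
  c a * ell i j a + c n * ell i j n < 0 -> pairing n parabola i j c > 0.
Proof.
  intros HX Ha Hai Hij Hjn Hc Hswap. rewrite pairing_parabola_outside by exact HX.
  assert (Hsum := sum_lab_ge_two_terms n (fun k => - c k * Rmax (ell i j k) 0) a n
                    ltac:(lia) ltac:(lia) ltac:(lia)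
                    ltac:(intros k Hk Hka _; apply outside_term_nonneg; auto; lia)).
  simpl in Hsum.
  rewrite (Rmax_left (ell i j a)), (Rmax_left (ell i j n)) in Hsum
    by (apply Rlt_le, orient_parabola_outside; lia).
  lra.
Qed.

Lemma pairing_parabola_pos a b i j c :
  is_diag n a b -> is_diag n i j -> swap_rel n i j a b ->
  in_XQ n parabola c -> sign_pattern n a b c ->
  ((a < i)%nat -> (b < j)%nat -> (j < n)%nat -> (b - i > 1)%nat ->
     c a * ell i j a + c n * ell i j n < 0) ->
  pairing n parabola i j c > 0.
Proof.
  intros Dab Dij Hsw HX [Hca [Hcb Hc]] Hswap. unfold is_diag in Dab, Dij.
  destruct Hsw as [Hnc | Hs]; unfold crossing in *.
  - assert (H : ((a <= i /\ j <= b) \/ j <= a \/ b <= i)%nat \/ (i <= a /\ b <= j)%nat)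
      by lia.
    destruct H as [Hin | Hout].
    + apply pairing_parabola_pos_inside; try lia. intros k Hk. apply Hc; lia.
    + assert (Hk0 : exists k0, (1 <= k0 <= n)%nat /\ (k0 < i \/ j < k0)%nat).
      { destruct (Nat.eq_dec i 1); [exists (S j) | exists (i - 1)%nat]; lia. }
      destruct Hk0 as [k0 [Hk0 Hk0out]].
      apply (pairing_parabola_pos_outside i j c k0); auto; try lia.
      intros k Hk Hkout. apply Hc; lia.
  - apply (pairing_parabola_pos_swap i j c a); auto; try lia.
    + intros k Hk Hka Hkout. apply Hc; lia.
    + apply Hswap; lia.
Qed.

End Parabola.

Definition count_lab (n : nat) (P : nat -> bool) : R :=
  sum_lab n (fun k => if P k then 1 else 0).

Lemma count_lab_pos n P k0 : (1 <= k0 <= n)%nat -> P k0 = true -> 0 < count_lab n P.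
Proof.
  intros Hk0 HP. apply (sum_lab_pos _ _ k0); [intros k _; destruct (P k); lra | exact Hk0 |].
  rewrite HP. lra.
Qed.

Section Balance.

Variables (t : nat -> R) (n a b : nat).
Hypothesis t_lt : forall i j, (i < j)%nat -> (j <= n)%nat -> t i < t j.
Hypotheses (Ha : (1 <= a)%nat) (Hab : (a + 2 <= b)%nat) (Hb : (b <= n)%nat).

Lemma t_neq i j : (i <= n)%nat -> (j <= n)%nat -> i <> j -> t i <> t j.
Proof.
  intros Hi Hj Hij. assert (H : (i < j \/ j < i)%nat) by lia.
  destruct H; [apply Rlt_not_eq | apply not_eq_sym, Rlt_not_eq]; apply t_lt; lia.
Qed.

Definition qab (k : nat) : R := (t k - t a) * (t k - t b).

Lemma qab_inside k : (a < k)%nat -> (k < b)%nat -> qab k < 0.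
Proof.
  intros Hak Hkb. unfold qab.
  pose proof (t_lt a k Hak ltac:(lia)). pose proof (t_lt k b Hkb Hb). nra.
Qed.

Lemma qab_outside k : (k <= n)%nat -> (k < a \/ b < k)%nat -> 0 < qab k.
Proof.
  intros Hk [H | H]; unfold qab.
  - pose proof (t_lt k a H ltac:(lia)). pose proof (t_lt k b ltac:(lia) Hb). nra.
  - pose proof (t_lt a k ltac:(lia) Hk). pose proof (t_lt b k H Hk). nra.
Qed.

Definition balanced (w : nat -> R) : Prop := sum_lab n (fun k => w k * qab k) = 0.

(* Endpoint masses [alpha w] at a and [beta w] at b with the same moments of
   order 0 and 1 as w; by [balanced w] they also match the moment of order 2. *)
Definition alpha (w : nat -> R) : R := sum_lab n (fun k => w k * (t b - t k)) / (t b - t a).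
Definition beta (w : nat -> R) : R := sum_lab n (fun k => w k * (t k - t a)) / (t b - t a).

Definition xq_of_weights (w : nat -> R) (k : nat) : R :=
  unit_vec a k * alpha w + unit_vec b k * beta w - w k.

Lemma ta_lt_tb : t a < t b.
Proof. apply t_lt; lia. Qed.

Lemma sum_xq_of_weights w g :
  sum_lab n (fun k => xq_of_weights w k * g k) =
  sum_lab n (fun k => w k * ((g a * (t b - t k) + g b * (t k - t a)) / (t b - t a) - g k)).
Proof.
  pose proof ta_lt_tb.
  transitivity (alpha w * g a + beta w * g b + -1 * sum_lab n (fun k => w k * g k)).
  - rewrite <- (sum_lab_scal n (-1)), <- (sum_lab_two_points n a b (alpha w) (beta w) g),
      <- sum_lab_add by lia.
    apply sum_lab_ext. intros k _. unfold xq_of_weights. ring.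
  - symmetry. unfold alpha, beta.
    rewrite (sum_lab_ext n _ (fun k => g a / (t b - t a) * (w k * (t b - t k))
               + (g b / (t b - t a) * (w k * (t k - t a)) + -1 * (w k * g k))))
      by (intros; field; lra).
    rewrite !sum_lab_add, !sum_lab_scal. field. lra.
Qed.

Lemma xq_of_weights_in_XQ w : balanced w -> in_XQ n (parabola t) (xq_of_weights w).
Proof.
  intros Hw. pose proof ta_lt_tb.
  split; [|split]; unfold parabola; simpl.
  - rewrite (sum_lab_ext n _ (fun k => xq_of_weights w k * 1)) by (intros; ring).
    rewrite sum_xq_of_weights. apply sum_lab_zero. intros k _. field. lra.
  - rewrite sum_xq_of_weights. apply sum_lab_zero. intros k _. field. lra.
  - rewrite sum_xq_of_weights, <- (Rmult_0_r (-1)), <- Hw, <- sum_lab_scal.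
    apply sum_lab_ext. intros k _. unfold qab. field. lra.
Qed.

Lemma xq_of_weights_at_a w : w a = 0 -> xq_of_weights w a = alpha w.
Proof.
  intros Hw. unfold xq_of_weights. rewrite unit_vec_same, unit_vec_other, Hw by lia. ring.
Qed.

Lemma xq_of_weights_at_b w : w b = 0 -> xq_of_weights w b = beta w.
Proof.
  intros Hw. unfold xq_of_weights. rewrite unit_vec_same, unit_vec_other, Hw by lia. ring.
Qed.

Lemma xq_of_weights_other w k : k <> a -> k <> b -> xq_of_weights w k = - w k.
Proof. intros. unfold xq_of_weights. rewrite !unit_vec_other by assumption. ring. Qed.

(* For balanced w, [alpha w * (t b - t a)^2] is the second moment of w about
   t b (and [beta w * (t b - t a)^2] the one about t a). *)
Lemma alpha_pos w k0 :
  balanced w -> (forall k, (1 <= k <= n)%nat -> 0 <= w k) ->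
  (1 <= k0 <= n)%nat -> k0 <> b -> 0 < w k0 -> 0 < alpha w.
Proof.
  intros Hbal Hw Hk0 Hk0b Hwk0. pose proof ta_lt_tb.
  assert (Hmom : sum_lab n (fun k => w k * (t b - t k)) * (t b - t a)
                 = sum_lab n (fun k => w k * (t b - t k) ^ 2)).
  { transitivity (sum_lab n (fun k => w k * (t b - t k) ^ 2) + -1 * sum_lab n (fun k => w k * qab k)).
    - rewrite (Rmult_comm (sum_lab n _)), <- !sum_lab_scal, <- sum_lab_add.
      apply sum_lab_ext. intros k _. unfold qab. ring.
    - rewrite Hbal. ring. }
  assert (Hsq : 0 < sum_lab n (fun k => w k * (t b - t k) ^ 2)).
  { apply (sum_lab_pos _ _ k0); [intros k Hk; apply Rmult_le_pos; [apply Hw, Hk | apply pow2_ge_0] | exact Hk0 |].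
    pose proof (t_neq k0 b ltac:(lia) Hb Hk0b).
    apply Rmult_lt_0_compat; [exact Hwk0 | rewrite <- Rsqr_pow2; apply Rsqr_pos_lt; lra]. }
  unfold alpha. apply Rdiv_lt_0_compat; nra.
Qed.

Lemma beta_pos w k0 :
  balanced w -> (forall k, (1 <= k <= n)%nat -> 0 <= w k) ->
  (1 <= k0 <= n)%nat -> k0 <> a -> 0 < w k0 -> 0 < beta w.
Proof.
  intros Hbal Hw Hk0 Hk0a Hwk0. pose proof ta_lt_tb.
  assert (Hmom : sum_lab n (fun k => w k * (t k - t a)) * (t b - t a)
                 = sum_lab n (fun k => w k * (t k - t a) ^ 2)).
  { transitivity (sum_lab n (fun k => w k * (t k - t a) ^ 2) + -1 * sum_lab n (fun k => w k * qab k)).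
    - rewrite (Rmult_comm (sum_lab n _)), <- !sum_lab_scal, <- sum_lab_add.
      apply sum_lab_ext. intros k _. unfold qab. ring.
    - rewrite Hbal. ring. }
  assert (Hsq : 0 < sum_lab n (fun k => w k * (t k - t a) ^ 2)).
  { apply (sum_lab_pos _ _ k0); [intros k Hk; apply Rmult_le_pos; [apply Hw, Hk | apply pow2_ge_0] | exact Hk0 |].
    pose proof (t_neq k0 a ltac:(lia) ltac:(lia) Hk0a).
    apply Rmult_lt_0_compat; [exact Hwk0 | rewrite <- Rsqr_pow2; apply Rsqr_pos_lt; lra]. }
  unfold beta. apply Rdiv_lt_0_compat; nra.
Qed.

Lemma xq_of_weights_sign_pattern w :
  balanced w -> w a = 0 -> w b = 0 ->
  (forall k, (1 <= k <= n)%nat -> k <> a -> k <> b -> 0 < w k) ->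
  sign_pattern n a b (xq_of_weights w).
Proof.
  intros Hbal Hwa Hwb Hw.
  assert (Hnonneg : forall k, (1 <= k <= n)%nat -> 0 <= w k).
  { intros k Hk. destruct (Nat.eq_dec k a) as [-> | Hka]; [lra|].
    destruct (Nat.eq_dec k b) as [-> | Hkb]; [lra|]. left; auto. }
  pose proof (Hw (S a) ltac:(lia) ltac:(lia) ltac:(lia)).
  split; [|split].
  - rewrite xq_of_weights_at_a by exact Hwa. apply (alpha_pos w (S a)); auto; lia.
  - rewrite xq_of_weights_at_b by exact Hwb. apply (beta_pos w (S a)); auto; lia.
  - intros k Hk Hka Hkb. rewrite xq_of_weights_other by assumption.
    pose proof (Hw k Hk Hka Hkb). lra.
Qed.

Lemma alpha_add_scal u v e : alpha (fun k => u k + e * v k) = alpha u + e * alpha v.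
Proof.
  pose proof ta_lt_tb. unfold alpha.
  rewrite (sum_lab_ext n _ (fun k => u k * (t b - t k) + e * (v k * (t b - t k))))
    by (intros; ring).
  rewrite sum_lab_add, sum_lab_scal. field. lra.
Qed.

Lemma balanced_add_scal u v e : balanced u -> balanced v -> balanced (fun k => u k + e * v k).
Proof.
  unfold balanced. intros Hu Hv.
  rewrite (sum_lab_ext n _ (fun k => u k * qab k + e * (v k * qab k))) by (intros; ring).
  rewrite sum_lab_add, sum_lab_scal, Hu, Hv. ring.
Qed.

(* Weights spread over all vertices except a and b, balanced by giving each
   vertex inside (a, b) the total count of vertices outside and vice versa. *)
Definition inside_ab (k : nat) : bool := (a <? k) && (k <? b).
Definition outside_ab (k : nat) : bool := (k <? a) || (b <? k).

Definition spread_weight (k : nat) : R :=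
  if inside_ab k then count_lab n outside_ab / - qab k
  else if outside_ab k then count_lab n inside_ab / qab k
  else 0.

Lemma spread_weight_at_a : spread_weight a = 0.
Proof.
  unfold spread_weight, inside_ab, outside_ab.
  rewrite Nat.ltb_irrefl. destruct (Nat.ltb_spec b a); [lia | reflexivity].
Qed.

Lemma spread_weight_at_b : spread_weight b = 0.
Proof.
  unfold spread_weight, inside_ab, outside_ab.
  rewrite Nat.ltb_irrefl, Bool.andb_false_r. destruct (Nat.ltb_spec b a); [lia | reflexivity].
Qed.

Lemma inside_outside_ab_cases k :
  ((a < k < b)%nat /\ inside_ab k = true /\ outside_ab k = false) \/
  ((k < a \/ b < k)%nat /\ inside_ab k = false /\ outside_ab k = true) \/
  ((k = a \/ k = b)%nat /\ inside_ab k = false /\ outside_ab k = false).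
Proof.
  unfold inside_ab, outside_ab.
  destruct (Nat.ltb_spec a k), (Nat.ltb_spec k b), (Nat.ltb_spec k a), (Nat.ltb_spec b k);
    simpl;
    first [ left; split; [lia | split; reflexivity]
          | right; left; split; [lia | split; reflexivity]
          | right; right; split; [lia | split; reflexivity]
          | exfalso; lia ].
Qed.

Lemma spread_weight_pos k :
  ~ (a = 1 /\ b = n)%nat -> (1 <= k <= n)%nat -> k <> a -> k <> b -> 0 < spread_weight k.
Proof.
  intros Hnot Hk Hka Hkb.
  assert (Hin : 0 < count_lab n inside_ab).
  { apply (count_lab_pos n _ (S a)); [lia|].
    destruct (inside_outside_ab_cases (S a)) as [[_ [H _]] | [[? _] | [? _]]]; auto; lia. }
  assert (Hout : 0 < count_lab n outside_ab).
  { assert (Hk0 : exists k0, (1 <= k0 <= n)%nat /\ (k0 < a \/ b < k0)%nat).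
    { destruct (Nat.eq_dec a 1); [exists n | exists 1%nat]; lia. }
    destruct Hk0 as [k0 [Hk0 Hk0out]]. apply (count_lab_pos n _ k0 Hk0).
    destruct (inside_outside_ab_cases k0) as [[? _] | [[_ [_ H]] | [? _]]]; auto; lia. }
  unfold spread_weight.
  destruct (inside_outside_ab_cases k) as [[Hk' [Hi Ho]] | [[Hk' [Hi Ho]] | [Hk' _]]];
    try (rewrite Hi, ?Ho).
  - pose proof (qab_inside k ltac:(lia) ltac:(lia)). apply Rdiv_lt_0_compat; lra.
  - pose proof (qab_outside k ltac:(lia) Hk'). apply Rdiv_lt_0_compat; lra.
  - lia.
Qed.

Lemma spread_weight_balanced : balanced spread_weight.
Proof.
  unfold balanced.
  rewrite (sum_lab_ext n _ (fun k => count_lab n inside_ab * (if outside_ab k then 1 else 0)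
                           + - count_lab n outside_ab * (if inside_ab k then 1 else 0))).
  - rewrite sum_lab_add, !sum_lab_scal. unfold count_lab. ring.
  - intros k Hk. unfold spread_weight.
    destruct (inside_outside_ab_cases k) as [[Hk' [Hi Ho]] | [[Hk' [Hi Ho]] | [Hk' [Hi Ho]]]];
      rewrite Hi, ?Ho.
    + pose proof (qab_inside k ltac:(lia) ltac:(lia)). field. lra.
    + pose proof (qab_outside k ltac:(lia) Hk'). field. lra.
    + ring.
Qed.

Section TailWeight.

Hypothesis Hbn : (b < n)%nat.

(* Its mass at n makes the coefficient at n negative enough for the swap case. *)
Definition tail_weight (k : nat) : R :=
  unit_vec (b - 1) k * / - qab (b - 1) + unit_vec n k * / qab n.

Lemma qab_pred_b : qab (b - 1) < 0.
Proof. apply qab_inside; lia. Qed.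

Lemma qab_last : 0 < qab n.
Proof. apply qab_outside; lia. Qed.

Lemma tail_weight_nonneg k : 0 <= tail_weight k.
Proof.
  pose proof qab_pred_b. pose proof qab_last. unfold tail_weight.
  pose proof (unit_vec_nonneg (b - 1) k). pose proof (unit_vec_nonneg n k).
  assert (0 < / - qab (b - 1)) by (apply Rinv_0_lt_compat; lra).
  assert (0 < / qab n) by (apply Rinv_0_lt_compat; lra). nra.
Qed.

Lemma tail_weight_balanced : balanced tail_weight.
Proof.
  pose proof qab_pred_b. pose proof qab_last. unfold balanced, tail_weight.
  rewrite sum_lab_two_points by lia. field. lra.
Qed.

Lemma tail_weight_at_a : tail_weight a = 0.
Proof. unfold tail_weight. rewrite !unit_vec_other by lia. ring. Qed.

Lemma tail_weight_at_b : tail_weight b = 0.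
Proof. unfold tail_weight. rewrite !unit_vec_other by lia. ring. Qed.

Lemma tail_weight_last : tail_weight n = / qab n.
Proof. unfold tail_weight. rewrite unit_vec_same, unit_vec_other by lia. ring. Qed.

Lemma alpha_tail_weight :
  alpha tail_weight = (t n - t (b - 1)) / ((t (b - 1) - t a) * (t n - t a) * (t b - t a)).
Proof.
  pose proof ta_lt_tb. pose proof (t_lt a (b - 1) ltac:(lia) ltac:(lia)).
  pose proof (t_lt (b - 1) b ltac:(lia) Hb). pose proof (t_lt b n Hbn ltac:(lia)).
  unfold alpha, tail_weight. rewrite sum_lab_two_points by lia. unfold qab.
  field. repeat split; lra.
Qed.

End TailWeight.

End Balance.

Definition half_param (n k : nat) : R := if k <? n then - (/ 2) ^ k else 1.

Lemma half_pow_pos k : 0 < (/ 2) ^ k.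
Proof. apply pow_lt; lra. Qed.

Lemma half_pow_lt i j : (i < j)%nat -> (/ 2) ^ j < (/ 2) ^ i.
Proof.
  intros Hij. replace j with (i + (j - i))%nat by lia. rewrite pow_add.
  assert ((/ 2) ^ (j - i) < 1) by (apply pow_lt_1_compat; [lra | lia]).
  pose proof (half_pow_pos i). nra.
Qed.

Lemma half_pow_le_1 k : (/ 2) ^ k <= 1.
Proof.
  destruct k as [|k]; [simpl; lra|].
  left. rewrite <- (pow_O (/ 2)). apply half_pow_lt. lia.
Qed.

Lemma half_param_below n k : (k < n)%nat -> half_param n k = - (/ 2) ^ k.
Proof. intros Hk. unfold half_param. now destruct (Nat.ltb_spec k n); [|lia]. Qed.

Lemma half_param_last n : half_param n n = 1.
Proof. unfold half_param. now rewrite Nat.ltb_irrefl. Qed.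

Lemma half_param_neg n k : (k < n)%nat -> half_param n k < 0.
Proof. intros Hk. rewrite half_param_below by exact Hk. pose proof (half_pow_pos k). lra. Qed.

Lemma half_param_lt n i j : (i < j)%nat -> (j <= n)%nat -> half_param n i < half_param n j.
Proof.
  intros Hij Hj. rewrite (half_param_below n i) by lia.
  destruct (Nat.eq_dec j n) as [-> | Hjn].
  - rewrite half_param_last. pose proof (half_pow_pos i). lra.
  - rewrite half_param_below by lia. pose proof (half_pow_lt i j Hij). lra.
Qed.

Lemma half_param_le n i j : (i <= j)%nat -> (j <= n)%nat -> half_param n i <= half_param n j.
Proof.
  intros Hij Hj. destruct (Nat.eq_dec i j) as [-> | Hne]; [lra|].
  left. apply half_param_lt; lia.
Qed.

Lemma Rdiv_lt_cross x y u v : 0 < y -> 0 < v -> x * v < u * y -> x / y < u / v.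
Proof.
  intros Hy Hv H. apply (Rmult_lt_reg_r (y * v)); [nra|].
  replace (x / y * (y * v)) with (x * v) by (field; lra).
  replace (u / v * (y * v)) with (u * y) by (field; lra). exact H.
Qed.

(* With A = 2^-a and P = 2^-(b-2): the parameters at a, b-2, b-1, b are
   -A, -P, -P/2, -P/4. *)
Lemma halving_ineq A P :
  0 < P -> P <= A / 2 -> A <= 1 / 2 ->
  (1 + P / 2) * (1 + P / 4) * (A - P) * A < (A - P / 2) * (A - P / 4) * (1 + P).
Proof.
  intros HP HPA HA.
  assert (E : (A - P / 2) * (A - P / 4) * (1 + P) - (1 + P / 2) * (1 + P / 4) * (A - P) * A
              = P * (A / 4 + P / 8 + A * A / 4 + P * P / 8 - A * A * P / 8 + A * P * P / 8))
    by field.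
  assert (0 < A / 4 + P / 8 + A * A / 4 + P * P / 8 - A * A * P / 8 + A * P * P / 8).
  { assert (A * A * P <= A * A * (1 / 4)) by (apply Rmult_le_compat_l; nra).
    assert (0 <= A * P * P) by (apply Rmult_le_pos; nra). nra. }
  nra.
Qed.

Lemma swap_ineq ta ti tb2 tj :
  ta < ti -> ti <= tb2 -> tb2 < tj -> tj < 0 ->
  (1 - tb2) * ((ti - ta) * (tj - ta)) < (tb2 - ta) * (- ta) * ((1 - ti) * (1 - tj)).
Proof.
  intros Hai Hib Hbj Hj.
  assert (H1 : (1 - tb2) * (ti - ta) <= (tb2 - ta) * (1 - ti)) by nra.
  assert (H2 : tj - ta < (- ta) * (1 - tj)) by nra.
  assert ((1 - tb2) * (ti - ta) * (tj - ta) <= (tb2 - ta) * (1 - ti) * (tj - ta))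
    by (apply Rmult_le_compat_r; lra).
  assert ((tb2 - ta) * (1 - ti) * (tj - ta) < (tb2 - ta) * (1 - ti) * ((- ta) * (1 - tj)))
    by (apply Rmult_lt_compat_l; nra).
  nra.
Qed.

Lemma corner_cap_ineq ta ti tb2 tj q m :
  ta < ti -> ti <= tb2 -> tb2 < tj -> tj < 0 -> 0 < q -> / q <= m ->
  (1 - tb2) / ((tb2 - ta) * (- ta) * q) * ((tj - ti) * ((ta - ti) * (ta - tj)))
  + - m * ((tj - ti) * ((1 - ti) * (1 - tj))) < 0.
Proof.
  intros Hai Hib Hbj Hj Hq Hm.
  pose proof (swap_ineq ta ti tb2 tj Hai Hib Hbj Hj) as Hcore.
  assert (HD : 0 < (tb2 - ta) * (- ta)) by nra.
  assert (HE : 0 < (tj - ti) * ((1 - ti) * (1 - tj))).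
  { apply Rmult_lt_0_compat; [lra|]. apply Rmult_lt_0_compat; lra. }
  assert (Hfirst : (1 - tb2) / ((tb2 - ta) * (- ta) * q) * ((tj - ti) * ((ta - ti) * (ta - tj)))
                   < / q * ((tj - ti) * ((1 - ti) * (1 - tj)))).
  { replace ((1 - tb2) / ((tb2 - ta) * (- ta) * q) * ((tj - ti) * ((ta - ti) * (ta - tj))))
      with ((tj - ti) / ((tb2 - ta) * (- ta) * q) * ((1 - tb2) * ((ti - ta) * (tj - ta))))
      by (field; lra).
    replace (/ q * ((tj - ti) * ((1 - ti) * (1 - tj))))
      with ((tj - ti) / ((tb2 - ta) * (- ta) * q) * ((tb2 - ta) * (- ta) * ((1 - ti) * (1 - tj))))
      by (field; lra).
    apply Rmult_lt_compat_l; [apply Rdiv_lt_0_compat; nra | exact Hcore]. }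
  assert (/ q * ((tj - ti) * ((1 - ti) * (1 - tj))) <= m * ((tj - ti) * ((1 - ti) * (1 - tj))))
    by (apply Rmult_le_compat_r; lra).
  lra.
Qed.

Section Construction.

Variables n a b : nat.
Hypotheses (Ha : (1 <= a)%nat) (Hab : (a + 2 <= b)%nat) (Hb : (b <= n)%nat)
           (Hnot : ~ (a = 1 /\ b = n)%nat).

Local Notation t := (half_param n).
Local Hint Resolve half_param_lt : core.

(* The largest coefficient at a that the swap condition tolerates when the
   coefficient at n is at most [- / qab n]: on the parabola the ratios
   (t i - t a) / (1 - t i) and (t j - t a) / (1 - t j) are bounded by their
   values at i = b - 2 and at t j = 0. *)
Definition corner_cap : R :=
  (1 - t (b - 2)) / ((t (b - 2) - t a) * (- t a) * qab t a b n).

Definition mix_coef : R :=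
  (corner_cap - alpha t n a b (tail_weight t n a b)) / alpha t n a b (spread_weight t n a b).

Definition mixed_weight (k : nat) : R :=
  tail_weight t n a b k + mix_coef * spread_weight t n a b k.

Definition xvec : nat -> R :=
  if ((a + 3 <=? b) && (b <? n))%bool then xq_of_weights t n a b mixed_weight
  else xq_of_weights t n a b (spread_weight t n a b).

Lemma spread_weight_nonneg k : (1 <= k <= n)%nat -> 0 <= spread_weight t n a b k.
Proof.
  intros Hk. destruct (Nat.eq_dec k a) as [-> | Hka].
  - rewrite spread_weight_at_a by lia. lra.
  - destruct (Nat.eq_dec k b) as [-> | Hkb].
    + rewrite spread_weight_at_b by lia. lra.
    + left. apply spread_weight_pos; auto.
Qed.

Lemma alpha_spread_pos : 0 < alpha t n a b (spread_weight t n a b).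
Proof.
  apply alpha_pos with (k0 := S a); auto; try lia.
  - apply spread_weight_balanced; auto.
  - exact spread_weight_nonneg.
  - apply spread_weight_pos; auto; lia.
Qed.

Section Swap.

Hypotheses (Hab3 : (a + 3 <= b)%nat) (Hbn : (b < n)%nat).

Lemma alpha_tail_lt_cap : alpha t n a b (tail_weight t n a b) < corner_cap.
Proof.
  rewrite alpha_tail_weight by (auto || lia). unfold corner_cap, qab.
  rewrite half_param_last, !half_param_below by lia.
  set (A := (/ 2) ^ a). set (P := (/ 2) ^ (b - 2)).
  assert (Eb1 : (/ 2) ^ (b - 1) = P / 2).
  { unfold P. replace (b - 1)%nat with (S (b - 2)) by lia. simpl. field. }
  assert (Eb : (/ 2) ^ b = P / 4).
  { unfold P. replace b with (S (S (b - 2))) at 1 by lia. simpl. field. }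
  rewrite Eb1, Eb.
  assert (HP : 0 < P) by apply half_pow_pos.
  assert (HPA : P <= A / 2).
  { unfold P, A. replace (b - 2)%nat with (S a + (b - 2 - S a))%nat by lia.
    rewrite pow_add. simpl.
    pose proof (half_pow_le_1 (b - 2 - S a)).
    pose proof (half_pow_pos a). nra. }
  assert (HA : A <= 1 / 2).
  { unfold A. replace a with (S (a - 1)) by lia. simpl.
    pose proof (half_pow_le_1 (a - 1)). pose proof (half_pow_pos (a - 1)). nra. }
  pose proof (halving_ineq A P HP HPA HA) as Hhalf.
  apply Rdiv_lt_cross.
  - repeat apply Rmult_lt_0_compat; lra.
  - repeat apply Rmult_lt_0_compat; lra.
  - assert (HA1 : 0 < 1 + A) by lra.
    pose proof (Rmult_lt_compat_l (1 + A) _ _ HA1 Hhalf). lra.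
Qed.

Lemma mix_coef_pos : 0 < mix_coef.
Proof.
  pose proof alpha_tail_lt_cap. pose proof alpha_spread_pos.
  unfold mix_coef. apply Rdiv_lt_0_compat; lra.
Qed.

Lemma mixed_weight_balanced : balanced t n a b mixed_weight.
Proof.
  apply balanced_add_scal;
    [apply tail_weight_balanced | apply spread_weight_balanced]; auto; lia.
Qed.

Lemma mixed_weight_at_a : mixed_weight a = 0.
Proof. unfold mixed_weight. rewrite tail_weight_at_a, spread_weight_at_a by lia. ring. Qed.

Lemma mixed_weight_at_b : mixed_weight b = 0.
Proof. unfold mixed_weight. rewrite tail_weight_at_b, spread_weight_at_b by lia. ring. Qed.

Lemma mixed_weight_pos k :
  (1 <= k <= n)%nat -> k <> a -> k <> b -> 0 < mixed_weight k.
Proof.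
  intros Hk Hka Hkb. unfold mixed_weight.
  pose proof (tail_weight_nonneg t n a b (half_param_lt n) Ha Hab Hb Hbn k).
  pose proof (spread_weight_pos t n a b (half_param_lt n) Ha Hab Hb k Hnot Hk Hka Hkb).
  pose proof mix_coef_pos. nra.
Qed.

Lemma mixed_weight_last : / qab t a b n <= mixed_weight n.
Proof.
  unfold mixed_weight. rewrite tail_weight_last by lia.
  pose proof (spread_weight_nonneg n ltac:(lia)). pose proof mix_coef_pos. nra.
Qed.

Lemma alpha_mixed_weight : alpha t n a b mixed_weight = corner_cap.
Proof.
  pose proof alpha_spread_pos. unfold mixed_weight.
  rewrite alpha_add_scal by (auto || lia). unfold mix_coef. field. lra.
Qed.

End Swap.

Lemma xvec_in_XQ : in_XQ n (parabola t) xvec.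
Proof.
  unfold xvec. destruct ((a + 3 <=? b) && (b <? n))%bool eqn:E;
    apply xq_of_weights_in_XQ; auto; try lia.
  - apply andb_prop in E as [E1 E2]. apply Nat.leb_le in E1. apply Nat.ltb_lt in E2.
    apply mixed_weight_balanced; assumption.
  - apply spread_weight_balanced; auto.
Qed.

Lemma xvec_sign_pattern : sign_pattern n a b xvec.
Proof.
  unfold xvec. destruct ((a + 3 <=? b) && (b <? n))%bool eqn:E;
    apply xq_of_weights_sign_pattern; auto; try lia.
  - apply andb_prop in E as [E1 E2]. apply Nat.leb_le in E1. apply Nat.ltb_lt in E2.
    apply mixed_weight_balanced; assumption.
  - apply andb_prop in E as [E1 E2]. apply Nat.leb_le in E1. apply Nat.ltb_lt in E2.
    apply mixed_weight_at_a; assumption.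
  - apply andb_prop in E as [E1 E2]. apply Nat.leb_le in E1. apply Nat.ltb_lt in E2.
    apply mixed_weight_at_b; assumption.
  - apply andb_prop in E as [E1 E2]. apply Nat.leb_le in E1. apply Nat.ltb_lt in E2.
    apply mixed_weight_pos; assumption.
  - apply spread_weight_balanced; auto.
  - apply spread_weight_at_a; lia.
  - apply spread_weight_at_b; lia.
  - intros k Hk Hka Hkb. apply spread_weight_pos; auto.
Qed.

Lemma xvec_swap i j :
  (a < i)%nat -> (b < j)%nat -> (j < n)%nat -> (b - i > 1)%nat ->
  xvec a * orient (parabola t i) (parabola t j) (parabola t a)
  + xvec n * orient (parabola t i) (parabola t j) (parabola t n) < 0.
Proof.
  intros Hai Hbj Hjn Hib. assert (Hab3 : (a + 3 <= b)%nat) by lia.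
  assert (Hbn : (b < n)%nat) by lia.
  unfold xvec. replace ((a + 3 <=? b) && (b <? n))%bool with true
    by (symmetry; apply andb_true_intro; split; [apply Nat.leb_le | apply Nat.ltb_lt]; lia).
  rewrite xq_of_weights_at_a, alpha_mixed_weight, xq_of_weights_other
    by (auto using mixed_weight_at_a || lia).
  rewrite !orient_parabola, half_param_last. unfold corner_cap.
  apply corner_cap_ineq.
  - apply half_param_lt; lia.
  - apply half_param_le; lia.
  - apply half_param_lt; lia.
  - apply half_param_neg; lia.
  - apply (qab_outside t n a b); auto; lia.
  - apply mixed_weight_last; assumption.
Qed.

End Construction.

Theorem lemma3p2 :
  forall n : nat, (4 <= n)%nat ->
  exists p : nat -> pt,
    convex_ngon n p /\
    exists x : nat -> nat -> (nat -> R),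
      (forall i j, is_diag n i j -> in_XQ n p (x i j)) /\
      (forall i j i' j', is_diag n i j -> is_diag n i' j' ->
         swap_rel n i j i' j' -> pairing n p i j (x i' j') > 0).
Proof.
  intros n _. exists (parabola (half_param n)).
  split; [apply parabola_convex, half_param_lt|].
  exists (xvec n). split.
  - intros a b Dab. unfold is_diag in Dab. apply xvec_in_XQ; lia.
  - intros i j a b Dij Dab Hsw.
    apply (pairing_parabola_pos (half_param n) n (half_param_lt n) a b); auto.
    + unfold is_diag in Dab. apply xvec_in_XQ; lia.
    + unfold is_diag in Dab. apply xvec_sign_pattern; tauto || lia.
    + unfold is_diag in Dab. intros. apply xvec_swap; tauto || lia.
Qed.
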